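(* \textsc{SymISR} can be solved in $O(n)$ time for paths and cycles with $n$ vertices.
   Context: All graphs are finite, simple and undirected. Two independent sets $I,J$ of $G$ are adjacent if $G[I\triangle J]$ is connected. A reconfiguration sequence from $I_s$ to $I_t$ of length $\ell$ is a sequence $\langle I_s=I_0,\dots,I_\ell=I_t\rangle$ of independent sets of $G$ with $G[I_{i-1}\triangle I_i]$ connected for every $i\in\{1,\dots,\ell\}$. \textsc{SymISR}: given $G$, independent sets $I_s,I_t$, and an integer $k$, decide whether there is a reconfiguration sequence from $I_s$ to $I_t$ of length at most $k$. *)

From mathcomp Require Import all_boot.
Set Implicit Arguments. Unset Strict Implicit. Unset Printing Implicit Defensive.

Definition is_path_graph (n : nat) (e : rel 'I_n) : Prop :=
  exists f : 'I_n -> 'I_n, injective f /\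
    forall u v, e u v = ((f u).+1 == f v) || ((f v).+1 == f u).

Definition is_cycle_graph (n : nat) (e : rel 'I_n) : Prop :=
  3 <= n /\ exists f : 'I_n -> 'I_n, injective f /\
    forall u v, e u v = ((f u).+1 %% n == f v) || ((f v).+1 %% n == f u).

Definition independent (T : finType) (e : rel T) (I : {set T}) : bool :=
  [forall x in I, forall y in I, ~~ e x y].

Definition induced_connected (T : finType) (e : rel T) (S : {set T}) : bool :=
  [forall x in S, forall y in S,
     connect (fun a b => [&& e a b, a \in S & b \in S]) x y].

Definition is_adjacent (T : finType) (e : rel T) (I J : {set T}) : bool :=
  induced_connected e ((I :\: J) :|: (J :\: I)).

(* <Is = I_0, I_1, ..., I_l = It> encoded as Is :: L, of length l = size L. *)
Definition reconf_seq (T : finType) (e : rel T) (Is It : {set T})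
    (L : seq {set T}) : bool :=
  [&& all (independent e) (Is :: L), path (is_adjacent e) Is L & last Is L == It].

Definition SymISR (T : finType) (e : rel T) (Is It : {set T}) (k : nat) : Prop :=
  exists L : seq {set T}, reconf_seq e Is It L /\ size L <= k.

Inductive instr : Type :=
| Cst    (d c : nat)
| Add    (d a b : nat)
| Sub    (d a b : nat)    (* M[d] := M[a] - M[b]  (truncated) *)
| Half   (d a : nat)
| LoadI  (d a : nat)
| StoreI (a s : nat)
| Jz     (a l : nat)
| Jmp    (l : nat)
| Halt.

Definition program := seq instr.
Record config := Config { pc : nat; mem : nat -> nat }.

Definition upd (m : nat -> nat) (a v : nat) : nat -> nat :=
  fun x => if x == a then v else m x.

Definition halted (P : program) (c : config) : bool :=
  match nth Halt P (pc c) with Halt => true | _ => false end.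

(* One step; a halted configuration (Halt, or pc outside the program) is fixed. *)
Definition step (P : program) (c : config) : config :=
  let m := mem c in let p := pc c in
  match nth Halt P p with
  | Cst d k => Config p.+1 (upd m d k)
  | Add d a b => Config p.+1 (upd m d (m a + m b))
  | Sub d a b => Config p.+1 (upd m d (m a - m b))
  | Half d a => Config p.+1 (upd m d (m a)./2)
  | LoadI d a => Config p.+1 (upd m d (m (m a)))
  | StoreI a s => Config p.+1 (upd m (m a) (m s))
  | Jz a l => Config (if m a == 0 then l else p.+1) m
  | Jmp l => Config l m
  | Halt => c
  end.

Definition exec (P : program) (t : nat) (c : config) : config := iter t (step P) c.

Definition decides_within (P : program) (m0 : nat -> nat) (t : nat) (Q : Prop) : Prop :=
  let c := exec P t (Config 0 m0) in halted P c /\ (mem c 0 != 0 <-> Q).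

(* Memory layout: M[0] = n, M[1] = m (number of edges), M[2] = k,
   M[3+2i], M[4+2i] = endpoints of the i-th edge of the list es,
   then n cells with the indicator of Is, then n cells with the indicator of It,
   all other cells 0. *)
Definition encode (n : nat) (es : seq ('I_n * 'I_n)) (Is It : {set 'I_n}) (k : nat)
    : nat -> nat :=
  fun a => nth 0 ([:: n; size es; k]
                  ++ flatten [seq [:: val p.1; val p.2] | p <- es]
                  ++ [seq nat_of_bool (v \in Is) | v <- enum 'I_n]
                  ++ [seq nat_of_bool (v \in It) | v <- enum 'I_n]) a.

Definition edge_list (n : nat) (e : rel 'I_n) (es : seq ('I_n * 'I_n)) : Prop :=
  all (fun p => e p.1 p.2) es /\
  forall u v, e u v -> count (fun p => (p == (u, v)) || (p == (v, u))) es = 1.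

(* Number the vertices along the path or cycle, so that every vertex has at most one
   successor, and call u an end of a vertex set S if u is in S but its successor is not.
   Twice the number of ends of S counts the places where membership in S changes along
   the graph, so the number of ends is subadditive under symmetric difference; it is at
   most one for a set inducing a connected subgraph. As Is (+) It is the symmetric
   difference of the sets flipped by the steps of a reconfiguration sequence, the sequence
   has at least as many steps as G[Is (+) It] has components, and flipping the components
   one at a time keeps the set independent and attains this bound. For nonempty D the
   number of components is max(1, |D| - |E(G[D])|), which a RAM program evaluates with
   one pass over the vertex indicators and one over the edge list: O(n) steps, since a
   path or cycle on n vertices has at most n edges. *)

From Pilot Require Import Defs.
From mathcomp Require Import all_boot zify.
From Stdlib Require Import FunctionalExtensionality.

Set Implicit Arguments. Unset Strict Implicit. Unset Printing Implicit Defensive.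

Lemma sum_nat_bool (T : finType) (b : pred T) : \sum_i (b i : nat) = #|b|.
Proof.
rewrite -sum1_card [RHS]big_mkcond /=; apply: eq_bigr => i _.
by rewrite unfold_in; case: (b i).
Qed.

Lemma sum_nat_bool_seq (T : Type) (s : seq T) (a : pred T) :
  \sum_(x <- s) (a x : nat) = count a s.
Proof. by elim: s => [|x s IH]; rewrite ?big_nil ?big_cons //= IH. Qed.

Lemma sum_nat_bool_split (T : finType) (a b : pred T) :
  \sum_i (a i : nat) = \sum_i (a i && b i : nat) + \sum_i (a i && ~~ b i : nat).
Proof. by rewrite -big_split; apply: eq_bigr => i _; case: (a i); case: (b i). Qed.

Lemma modn_succ_small n i : i < n -> i.+1 %% n = if i.+1 == n then 0 else i.+1.
Proof. by move=> lt_in; case: eqP => [->|ne]; rewrite ?modnn // modn_small //; lia. Qed.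

Section SymmetricDifference.
Variable T : finType.
Implicit Types A B C I J K : {set T}.

Definition symdiff A B := (A :\: B) :|: (B :\: A).

Lemma in_symdiff A B x : (x \in symdiff A B) = ((x \in A) != (x \in B)).
Proof. by rewrite !inE; case: (x \in A); case: (x \in B). Qed.

Lemma symdiff_eq0 A B : (symdiff A B == set0) = (A == B).
Proof.
apply/eqP/eqP => [E|->]; apply/setP => x.
  by have := in_symdiff A B x; rewrite E inE; case: (x \in A); case: (x \in B).
by rewrite in_symdiff inE; case: (x \in B).
Qed.

Lemma symdiffK I C : symdiff I (symdiff I C) = C.
Proof. by apply/setP => x; rewrite !in_symdiff; case: (x \in I); case: (x \in C). Qed.

Lemma symdiff_trans I J K : symdiff I K = symdiff (symdiff J K) (symdiff I J).
Proof.
by apply/setP => x; rewrite !in_symdiff; case: (x \in I); case: (x \in J); case: (x \in K).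
Qed.

Lemma symdiff_flip I J C :
  C \subset symdiff I J -> symdiff (symdiff I C) J = symdiff I J :\: C.
Proof.
move/subsetP=> sCD; apply/setP => x; rewrite in_setD !in_symdiff.
case xC: (x \in C); last by case: (x \in I); case: (x \in J).
by move: (sCD x xC); rewrite in_symdiff; case: (x \in I); case: (x \in J).
Qed.

End SymmetricDifference.

(** * Shortest reconfiguration sequences on paths and cycles *)

Section PathOrCycle.
Variables (n : nat) (e : rel 'I_n) (f : 'I_n -> 'I_n) (cyc : bool).

Definition next_label (i : nat) := if cyc then i.+1 %% n else i.+1.

Hypothesis f_inj : injective f.
Hypothesis e_next :
  forall u v, e u v = (next_label (f u) == f v) || (next_label (f v) == f u).
Hypothesis cyc_ge3 : cyc -> 3 <= n.

Implicit Types S T A B C D I J : {set 'I_n}.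

Lemma e_sym : symmetric e.
Proof. by move=> u v; rewrite !e_next orbC. Qed.

Definition succ (u : 'I_n) : option 'I_n := [pick v | next_label (f u) == f v].

Lemma succP u v : (succ u == Some v) = (next_label (f u) == f v).
Proof.
rewrite /succ; case: pickP => [w /eqP fw | no_succ]; last by rewrite no_succ.
apply/eqP/eqP => [[<-] // | fv]; congr Some; apply: f_inj; apply: val_inj.
by rewrite /= -fw fv.
Qed.

Lemma succ_edge u v : succ u = Some v -> e u v.
Proof. by move/eqP; rewrite succP e_next => ->. Qed.

Lemma edge_succ u v : e u v -> succ u = Some v \/ succ v = Some u.
Proof. by rewrite e_next -!succP => /orP [] /eqP; [left | right]. Qed.

Lemma next_label_inj i j : i < n -> j < n -> next_label i = next_label j -> i = j.
Proof.
rewrite /next_label; case: cyc => [lt_in lt_jn | _ _ []//].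
by rewrite (modn_succ_small lt_in) (modn_succ_small lt_jn); case: eqP; case: eqP; lia.
Qed.

Lemma succ_inj u1 u2 w : succ u1 = Some w -> succ u2 = Some w -> u1 = u2.
Proof.
move=> /eqP + /eqP; rewrite !succP => /eqP f1 /eqP f2; apply: f_inj; apply: val_inj.
by apply: next_label_inj; rewrite ?ltn_ord ?f1 ?f2.
Qed.

Lemma succ_antisym u v : succ u = Some v -> succ v = Some u -> False.
Proof.
move=> /eqP + /eqP; rewrite !succP /next_label => /eqP + /eqP.
case c: cyc; last by lia.
have := cyc_ge3 c; have := ltn_ord (f u); have := ltn_ord (f v).
rewrite (modn_succ_small (ltn_ord (f u))) (modn_succ_small (ltn_ord (f v))).
by case: eqP; case: eqP; lia.
Qed.

Lemma succ_total : cyc -> forall u, exists v, succ u = Some v.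
Proof.
move=> c u; have [g fK gK] := injF_bij f_inj.
have lt_next : next_label (f u) < n by rewrite /next_label c ltn_pmod //; have := cyc_ge3 c; lia.
by exists (g (Ordinal lt_next)); apply/eqP; rewrite succP gK.
Qed.

Lemma succ_None_uniq u1 u2 : succ u1 = None -> succ u2 = None -> u1 = u2.
Proof.
case c: cyc; first by case: (succ_total c u1) => v ->.
have [g fK gK] := injF_bij f_inj.
have last_label u : succ u = None -> (f u : nat) = n.-1.
  move=> no_succ; have := ltn_ord (f u); case: (ltnP (f u).+1 n) => [lt_next|]; last by lia.
  suff : succ u = Some (g (Ordinal lt_next)) by rewrite no_succ.
  by apply/eqP; rewrite succP gK /next_label c.
by move=> /last_label f1 /last_label f2; apply: f_inj; apply: val_inj; rewrite /= f1 f2.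
Qed.

Definition succ_in (S : {set 'I_n}) u := if succ u is Some v then v \in S else false.
Definition has_pred v := [exists u, succ u == Some v].

Definition ends (S : {set 'I_n}) := \sum_u ((u \in S) && ~~ succ_in S u).

(* The number of components of G[S]; [maxn 1] accounts for the full vertex set of a
   cycle, which has no end. *)
Definition ncomp (S : {set 'I_n}) := if S == set0 then 0 else maxn 1 (ends S).

(* The changes of membership in S along the path or cycle, counting a vertex of S
   without predecessor as one. *)
Definition boundary (S : {set 'I_n}) :=
  \sum_u ((u \in S) != succ_in S u : nat) + \sum_u ((u \in S) && ~~ has_pred u : nat).

Lemma sum_succ_in S : \sum_u (succ_in S u : nat) = \sum_v ((v \in S) && has_pred v : nat).
Proof.
pose sc u := odflt u (succ u).
rewrite !sum_nat_bool.
have -> : #|succ_in S| = #|sc @: [set u | succ_in S u]|.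
  rewrite card_in_imset; first by apply: eq_card => u; rewrite inE.
  move=> u1 u2; rewrite !inE /succ_in /sc.
  case s1: (succ u1) => [w1|] //; case s2: (succ u2) => [w2|] //= _ _ w12.
  by apply: succ_inj s1 _; rewrite s2 w12.
apply: eq_card => v; rewrite [v \in sc @: _]unfold_in unfold_in /=.
apply/imsetP/andP => [[u] | [vS /existsP [u /eqP su]]].
  rewrite inE /succ_in /sc; case su: (succ u) => [w|] // wS ->.
  by split=> //; apply/existsP; exists u; rewrite su.
by exists u; rewrite ?inE /succ_in /sc su.
Qed.

Lemma boundary_ends S : boundary S = ends S + ends S.
Proof.
rewrite /boundary /ends.
have change_split : \sum_u ((u \in S) != succ_in S u : nat) =
    \sum_u ((u \in S) && ~~ succ_in S u : nat) + \sum_u (succ_in S u && ~~ (u \in S) : nat).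
  by rewrite -big_split; apply: eq_bigr => u _; case: (u \in S); case: (succ_in S u).
have succ_in_split := sum_nat_bool_split (succ_in S) (fun u => u \in S).
have S_succ_split := sum_nat_bool_split (fun u => u \in S) (succ_in S).
have S_pred_split := sum_nat_bool_split (fun u => u \in S) has_pred.
have succ_in_S : \sum_u (succ_in S u && (u \in S) : nat) = \sum_u ((u \in S) && succ_in S u : nat).
  by apply: eq_bigr => u _; rewrite andbC.
have := sum_succ_in S; simpl in *; lia.
Qed.

Lemma boundary_symdiff A B : boundary (symdiff A B) <= boundary A + boundary B.
Proof.
have succ_in_symdiff u : succ_in (symdiff A B) u = succ_in A u (+) succ_in B u.
  rewrite /succ_in; case: (succ u) => [v|] //.
  by rewrite in_symdiff; case: (v \in A); case: (v \in B).
rewrite /boundary addnACA; apply: leq_add; rewrite -big_split; apply: leq_sum => u _;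
by rewrite ?succ_in_symdiff in_symdiff;
  case: (u \in A); case: (u \in B); case: (succ_in A u); case: (succ_in B u); case: (has_pred u).
Qed.

Lemma ends_symdiff A B : ends (symdiff A B) <= ends A + ends B.
Proof. by have := boundary_symdiff A B; rewrite !boundary_ends; lia. Qed.

Definition induced (S : {set 'I_n}) := fun u v => [&& e u v, u \in S & v \in S].

Lemma induced_sym S : symmetric (induced S).
Proof. by move=> u v; rewrite /induced e_sym; case: (u \in S); case: (v \in S); rewrite ?andbF. Qed.

(* Positions along the path, or along the cycle cut open at a vertex outside T. *)
Definition rank_on (T : {set 'I_n}) (r : 'I_n -> nat) :=
  (forall w w', w \in T -> w' \in T -> succ w = Some w' -> r w' = (r w).+1) /\
  {in T &, injective r}.

Lemma exists_rank_on T : (cyc -> exists w0, w0 \notin T) -> exists r, rank_on T r.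
Proof.
move=> outT; case c: cyc in outT; last first.
  exists (fun w => val (f w)); split=> [w w' _ _ /eqP|u v _ _ fuv].
    by rewrite succP /next_label c => /eqP /= <-.
  by apply: f_inj; apply: val_inj.
have [w0 w0T] := outT erefl.
have fw0 w : w \in T -> (f w : nat) != f w0.
  by apply: contraL => /eqP/val_inj/f_inj ->.
exists (fun w => if f w0 < f w then f w - (f w0).+1 else f w + n - (f w0).+1); split.
  move=> w w' wT w'T /eqP; rewrite succP /next_label c (modn_succ_small (ltn_ord (f w))).
  move=> /eqP; case: eqP => fw_last fw'; have := fw0 w wT; have := fw0 w' w'T;
  have := ltn_ord (f w); have := ltn_ord (f w0); have := ltn_ord (f w');
  by case: ifP; case: ifP; lia.
move=> u v uT vT /= ruv; apply: f_inj; apply: val_inj => /=; move: ruv.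
have := fw0 u uT; have := fw0 v vT.
have := ltn_ord (f u); have := ltn_ord (f v); have := ltn_ord (f w0).
by case: ifP; case: ifP; lia.
Qed.

Lemma connect_rank_le T r u w : rank_on T r -> u \in T -> ~~ succ_in T u ->
  connect (induced T) u w -> r w <= r u.
Proof.
move=> [r_succ r_inj] uT u_end /connectP [p u_p ->].
suff : forall x, x \in T -> r x <= r u -> path (induced T) x p -> r (last x p) <= r u.
  by apply; rewrite ?leqnn.
elim: p {u_p} => [|v p IH] x xT rx //= /andP [/and3P [xv _ vT] vp].
apply: (IH _ vT _ vp); case: (edge_succ xv) => sx; last by have := r_succ v x vT xT sx; lia.
have := r_succ x v xT vT sx; case: (ltngtP (r x) (r u)) => [||/(r_inj x u xT uT) xu]; try lia.
by move: u_end; rewrite /succ_in -xu sx vT.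
Qed.

Lemma ends_set0 : ends set0 = 0.
Proof. by rewrite /ends big1 // => u _; rewrite inE. Qed.

Lemma ends_gt0 T : T != set0 -> (exists w0, w0 \notin T) -> 0 < ends T.
Proof.
move=> /set0Pn [x xT] outT; have [r [r_succ _]] := exists_rank_on (fun _ => outT).
have [u uT r_max] := arg_maxnP r xT; have {}uT : u \in T := uT.
have u_end : ~~ succ_in T u.
  rewrite /succ_in; case su: (succ u) => [w|] //; apply/negP => wT.
  by have := r_max w wT; rewrite (r_succ u w uT wT su); lia.
by rewrite /ends (bigD1 u) //= uT u_end.
Qed.

Lemma ends_connected T : induced_connected e T -> ends T <= 1.
Proof.
move=> /forall_inP T_conn; rewrite leqNgt /ends sum_nat_bool.
apply/negP => /card_gt1P [u1 [u2 [/andP [u1T end1] /andP [u2T end2] u12]]].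
have outT : cyc -> exists w0, w0 \notin T.
  move=> c; apply/existsP; apply: contraNT end1; rewrite negb_exists => /forallP allT.
  by rewrite /succ_in; have [v ->] := succ_total c u1; move: (allT v); rewrite negbK.
have [r [r_succ r_inj]] := exists_rank_on outT.
have conn x y : x \in T -> y \in T -> connect (induced T) x y.
  by move=> xT yT; move/forall_inP: (T_conn x xT); apply.
have := connect_rank_le (conj r_succ r_inj) u1T end1 (conn u1 u2 u1T u2T).
have := connect_rank_le (conj r_succ r_inj) u2T end2 (conn u2 u1 u2T u1T).
by move=> le21 le12; move/eqP: u12; apply; apply: r_inj => //; apply/eqP; rewrite eqn_leq le12 le21.
Qed.

Definition closed_in D C := forall x y, x \in C -> y \in D -> e x y -> y \in C.

Lemma ends_split D C : C \subset D -> closed_in D C -> ends D = ends C + ends (D :\: C).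
Proof.
move=> /subsetP sCD C_closed; rewrite /ends -big_split; apply: eq_bigr => u _.
rewrite inE /succ_in; case uC: (u \in C) => /=.
  rewrite sCD //=; case su: (succ u) => [v|] //=.
  case vC: (v \in C); first by rewrite sCD.
  by case vD: (v \in D) => //; rewrite (C_closed u v uC vD (succ_edge su)) in vC.
case uD: (u \in D) => //=; case su: (succ u) => [v|] //=.
case vC: (v \in C) => /=; last by rewrite inE vC.
by have := C_closed v u vC uD; rewrite e_sym (succ_edge su) uC => /(_ isT).
Qed.

Definition comp D x := [set y in D | connect (induced D) x y].

Lemma comp_sub D x : comp D x \subset D.
Proof. by apply/subsetP => y; rewrite inE => /andP []. Qed.

Lemma comp_closed D x : closed_in D (comp D x).
Proof.
move=> y z; rewrite !inE => /andP [yD xy] zD yz; rewrite zD /=.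
by apply: connect_trans xy (connect1 _); rewrite /induced yz yD zD.
Qed.

Lemma comp_connected D x : induced_connected e (comp D x).
Proof.
have lift y z : y \in comp D x -> connect (induced D) y z -> connect (induced (comp D x)) y z.
  move=> + /connectP [p + ->]; elim: p y => [|v p IH] y yC //= /andP [yv vp].
  have vC : v \in comp D x by move: yv => /and3P [yv _ vD]; apply: comp_closed yC vD yv.
  apply: connect_trans (connect1 _) (IH v vC vp).
  by move: yv => /and3P [yv _ _]; rewrite /induced yv yC vC.
apply/forall_inP => y yC; apply/forall_inP => z zC; apply: (lift y z yC).
move: yC zC; rewrite !inE => /andP [_ xy] /andP [_ xz].
by apply: connect_trans _ xz; rewrite (sym_connect_sym (@induced_sym D)).
Qed.

Lemma independent_flip I J C : independent e I -> independent e J ->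
  C \subset symdiff I J -> closed_in (symdiff I J) C -> independent e (symdiff I C).
Proof.
move=> /forall_inP I_ind /forall_inP J_ind /subsetP sCD C_closed.
have no_edge S x y : (forall x, x \in S -> [forall (y | y \in S), ~~ e x y]) ->
    x \in S -> y \in S -> e x y -> False.
  by move=> S_ind xS yS; move/forall_inP: (S_ind x xS) => /(_ y yS)/negP.
have CJ x : x \in C -> x \notin I -> x \in J.
  by move=> xC; move: (sCD x xC); rewrite in_symdiff; case: (x \in I); case: (x \in J).
have across x y : x \notin C -> x \in I -> y \in C -> y \notin I -> e x y -> False.
  move=> xC xI yC yI xy; case xD: (x \in symdiff I J).
    by move: (C_closed y x yC xD); rewrite e_sym xy (negbTE xC) => /(_ isT).
  have xJ : x \in J by move: xD; rewrite in_symdiff xI; case: (x \in J).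
  exact: no_edge J_ind xJ (CJ y yC yI) xy.
apply/forall_inP => x xS; apply/forall_inP => y yS; apply/negP => xy.
move: xS yS; rewrite !in_symdiff.
case xC: (x \in C); case yC: (y \in C); case xI: (x \in I); case yI: (y \in I) => //= _ _.
- by apply: no_edge J_ind (CJ x _ _) (CJ y _ _) xy; rewrite ?xC ?yC ?xI ?yI.
- by apply: (across y x); rewrite ?xC ?yC ?xI ?yI // e_sym.
- by apply: (across x y); rewrite ?xC ?yC ?xI ?yI.
- exact: no_edge I_ind xI yI xy.
Qed.

Lemma ncomp_split D C : C \subset D -> C != set0 -> closed_in D C ->
  induced_connected e C -> ncomp D = (ncomp (D :\: C)).+1.
Proof.
move=> sCD C_n0 C_closed C_conn.
have D_ends := ends_split sCD C_closed; have C_ends := ends_connected C_conn.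
have /set0Pn [x xC] := C_n0.
have D_n0 : D != set0 by apply/set0Pn; exists x; apply: (subsetP sCD).
rewrite /ncomp (negbTE D_n0); case: ifP => [/eqP DC0 | /negbT DC_n0].
  by move: D_ends; rewrite DC0 ends_set0; lia.
have /set0Pn [y] := DC_n0; rewrite inE => /andP [yC _].
have := ends_gt0 C_n0 (ex_intro _ y yC).
have outDC : exists w, w \notin D :\: C by exists x; rewrite inE xC.
by have := ends_gt0 DC_n0 outDC; lia.
Qed.

Lemma reconf_seq_cons I I' J L : independent e I -> is_adjacent e I I' ->
  reconf_seq e I' J L -> reconf_seq e I J (I' :: L).
Proof.
by move=> I_ind II' /and3P [L_ind I'L L_last]; apply/and3P; split; rewrite /= ?I_ind ?II'.
Qed.

Lemma exists_reconf_seq I J : independent e I -> independent e J ->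
  exists2 L, reconf_seq e I J L & size L = ncomp (symdiff I J).
Proof.
have [N] := ubnP #|symdiff I J|; elim: N I => // N IH I ltDN I_ind J_ind.
have [DJ | /set0Pn [x xD]] := eqVneq (symdiff I J) set0.
  have IJ : I = J by apply/eqP; rewrite -symdiff_eq0; apply/eqP.
  exists [::]; last by rewrite /ncomp DJ eqxx.
  by rewrite /reconf_seq /= IJ J_ind eqxx.
set D := symdiff I J; set C := comp D x.
have xC : x \in C by rewrite inE xD connect0.
have C_n0 : C != set0 by apply/set0Pn; exists x.
have sCD : C \subset D := comp_sub D x.
have flipD : symdiff (symdiff I C) J = D :\: C := symdiff_flip sCD.
have [||L IL sizeL] := IH (symdiff I C) _ _ J_ind.
- have : 0 < #|C| by apply/card_gt0P; exists x.
  by rewrite flipD cardsDS //; move: ltDN (subset_leq_card sCD); rewrite -/D; lia.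
- exact: independent_flip I_ind J_ind sCD (@comp_closed D x).
exists (symdiff I C :: L); first apply: reconf_seq_cons => //.
  by rewrite /is_adjacent -/(symdiff I (symdiff I C)) symdiffK; apply: comp_connected.
by rewrite /= sizeL flipD (ncomp_split sCD C_n0 (@comp_closed D x) (comp_connected D x)).
Qed.

Lemma ends_symdiff_last I L : path (is_adjacent e) I L -> ends (symdiff I (last I L)) <= size L.
Proof.
elim: L I => [|J L IH] I /=.
  by rewrite /ends big1 // => u _; rewrite in_symdiff eqxx.
move=> /andP [IJ JL]; rewrite (symdiff_trans I J (last J L)) -addn1.
by apply: leq_trans (ends_symdiff _ _) (leq_add (IH J JL) (ends_connected IJ)).
Qed.

Lemma ncomp_le_size I J L : reconf_seq e I J L -> ncomp (symdiff I J) <= size L.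
Proof.
case/and3P => _ IL /eqP <-; have := ends_symdiff_last IL.
rewrite /ncomp; case: ifP => // D_n0; rewrite geq_max => ->; rewrite andbT.
by case: L IL D_n0 => //= _; rewrite symdiff_eq0 eqxx.
Qed.

Lemma SymISR_ncomp I J k : independent e I -> independent e J ->
  SymISR e I J k <-> ncomp (symdiff I J) <= k.
Proof.
move=> I_ind J_ind; split=> [[L [IJL le_Lk]] | le_k].
  exact: leq_trans (ncomp_le_size IJL) le_Lk.
by have [L IJL sizeL] := exists_reconf_seq I_ind J_ind; exists L; rewrite sizeL.
Qed.

(** * Counting with the edge list *)

Variable es : seq ('I_n * 'I_n).
Hypothesis es_edges : edge_list e es.

Definition succ_pair u (p : 'I_n * 'I_n) :=
  if succ u is Some v then (p == (u, v)) || (p == (v, u)) else false.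

Lemma succ_pairE u v w p : succ u = Some v -> (p == (u, v)) || (p == (v, u)) ->
  succ_pair w p = (w == u).
Proof.
move=> su p_uv; rewrite /succ_pair; case: (eqVneq w u) => [-> | wu]; first by rewrite su.
case sw: (succ w) => [z|] //; apply/negP => p_wz.
move: p_uv p_wz => /orP [] /eqP -> /orP [] /eqP /pair_equal_spec [a b];
  by [rewrite a eqxx in wu | rewrite b eqxx in wu
      | rewrite -a -b in sw; case: (succ_antisym su sw)].
Qed.

Lemma sum_succ_pair p : e p.1 p.2 -> \sum_u (succ_pair u p : nat) = 1.
Proof.
have sum1 u v : succ u = Some v -> (p == (u, v)) || (p == (v, u)) ->
    \sum_w (succ_pair w p : nat) = 1.
  move=> su p_uv; rewrite (bigD1 u) //= (succ_pairE _ su p_uv) eqxx big1 // => w /negbTE wu.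
  by rewrite (succ_pairE _ su p_uv) wu.
by case: p sum1 => x y sum1 /= /edge_succ [] /sum1 ->; rewrite ?eqxx ?orbT.
Qed.

Lemma count_edge_list (P : pred ('I_n * 'I_n)) : (forall u v, P (u, v) = P (v, u)) ->
  count P es = \sum_u ((if succ u is Some v then P (u, v) else false) : nat).
Proof.
move=> P_sym; have [es_e es_once] := es_edges.
transitivity (\sum_(p <- es) \sum_u (succ_pair u p && P p : nat)).
  rewrite -sum_nat_bool_seq !big_seq; apply: eq_bigr => p p_es.
  rewrite -[LHS]muln1 -(sum_succ_pair (allP es_e p p_es)) big_distrr /=.
  by apply: eq_bigr => u _; case: (P p); case: (succ_pair u p).
rewrite exchange_big /=; apply: eq_bigr => u _; rewrite /succ_pair.
case su: (succ u) => [v|]; last by rewrite big1.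
rewrite -(muln1 (P (u, v))) -(es_once u v (succ_edge su)) -sum_nat_bool_seq big_distrr /=.
apply: eq_bigr => p _; case: eqP => [->|_] /=; first by case: (P (u, v)).
by case: eqP => [->|_] /=; rewrite ?muln0 // -P_sym; case: (P (u, v)).
Qed.

Lemma size_edge_list : size es = \sum_u (succ u != None : nat).
Proof. by rewrite -count_predT count_edge_list //; apply: eq_bigr => u _; case: (succ u). Qed.

Lemma size_edge_list_le : size es <= n.
Proof. by rewrite size_edge_list sum_nat_bool (leq_trans (max_card _)) ?card_ord. Qed.

Lemma size_edge_list_ge : n <= (size es).+1.
Proof.
have n_split : \sum_u (succ u != None : nat) + \sum_u (succ u == None : nat) = n.
  rewrite -big_split -[RHS]card_ord -sum1_card; apply: eq_bigr => u _.
  by case: (succ u).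
rewrite size_edge_list -addn1 -[X in X <= _]n_split leq_add2l sum_nat_bool.
apply/card_le1P => x /eqP + y; rewrite !unfold_in => sx.
by apply/eqP/eqP => [sy|->//]; apply: succ_None_uniq sy sx.
Qed.

Lemma ends_edge_list D :
  ends D = \sum_u ((u \in D) : nat) - count (fun p => (p.1 \in D) && (p.2 \in D)) es.
Proof.
have -> : count (fun p => (p.1 \in D) && (p.2 \in D)) es = \sum_u ((u \in D) && succ_in D u : nat).
  rewrite count_edge_list => [|u v]; last by rewrite /= andbC.
  by apply: eq_bigr => u _; rewrite /succ_in; case: (succ u) => [v|] //=; rewrite andbF.
by rewrite (sum_nat_bool_split (fun u => u \in D) (succ_in D)) addKn.
Qed.

End PathOrCycle.

(** * The RAM program *)

Arguments exec : simpl never.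
Arguments upd : simpl never.

Lemma execS P t c : exec P t.+1 c = exec P t (step P c).
Proof. by rewrite /exec iterSr. Qed.

Lemma execD P s t c : exec P (s + t) c = exec P t (exec P s c).
Proof. by rewrite /exec addnC iterD. Qed.

Lemma exec_halted P t c : halted P c -> exec P t c = c.
Proof.
move=> c_halted; elim: t => // t IH; rewrite execS; move: c_halted.
by rewrite /halted /step; case: (nth Halt P (pc c)) => //; case: c IH.
Qed.

(* A memory with the registers 0..11 of [prog] listed explicitly, for symbolic execution. *)
Definition mk_mem (r : seq nat) (H : nat -> nat) : nat -> nat :=
  fun a => if a < 12 then nth 0 r a else H a.
Arguments mk_mem : simpl never.

Lemma mk_mem_lo r H a : a < 12 -> mk_mem r H a = nth 0 r a.
Proof. by rewrite /mk_mem => ->. Qed.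

Lemma mk_mem_hi r H a : 12 <= a -> mk_mem r H a = H a.
Proof. by move=> le12a; rewrite /mk_mem ltnNge le12a. Qed.

Lemma upd_mk_mem_lo r H d v : d < 12 -> upd (mk_mem r H) d v = mk_mem (set_nth 0 r d v) H.
Proof.
move=> lt_d12; apply: functional_extensionality => a; rewrite /upd /mk_mem nth_set_nth /=.
by case: eqP => [->|_]; rewrite ?lt_d12.
Qed.

Lemma upd_mk_mem_hi r H d v : 12 <= d -> upd (mk_mem r H) d v = mk_mem r (upd H d v).
Proof.
move=> le12d; apply: functional_extensionality => a; rewrite /upd /mk_mem.
by case: eqP => [->|_] //; rewrite ltnNge le12d.
Qed.

Lemma upd_same H d v : upd H d v d = v.
Proof. by rewrite /upd eqxx. Qed.

Lemma upd_other H d v a : a != d -> upd H d v a = H a.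
Proof. by rewrite /upd => /negbTE ->. Qed.

Ltac simpl_mem := repeat first [progress (rewrite /=) | match goal with
  | |- context [upd (mk_mem ?r ?H) ?d ?v] => rewrite (@upd_mk_mem_lo r H d v); last by []
  | |- context [upd (mk_mem ?r ?H) ?d ?v] => rewrite (@upd_mk_mem_hi r H d v); last by lia
  | |- context [mk_mem ?r ?H ?a] => rewrite (@mk_mem_lo r H a); last by []
  | |- context [mk_mem ?r ?H ?a] => rewrite (@mk_mem_hi r H a); last by lia
  end].

(* The registers 0..11 overlap the input, which is therefore first copied to
   X := 12 + 2 P, where P := 2 n + (n - m) (named [offset] and [code] below); since
   n - m <= 1 on paths and cycles, P determines both n and m.
   pc  0-29: compute P (cell 0) and X (cell 1), save k at X and cells 3..11 at X + 3..X + 11;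
   pc 30-36: copy cells 12..X - 1 to X + 12..2 X - 1;
   pc 37-49: recover n (cell 8) and m (cell 9), point cell 11 at the copied edge list
             and cell 10 at the copied indicator of Is;
   pc 50-61: cell 2 := |Is (+) It|, summing the exclusive or of the indicator bits;
   pc 62-64: accept if cell 2 = 0;
   pc 65-92: subtract from cell 2 the number of edges with both ends in Is (+) It;
   pc 93-100: accept iff 0 < k and cell 2 <= k. *)
Definition prog : program := [::
  Defs.Sub 1 0 1; Add 0 0 0; Add 0 0 1; Cst 1 12; Add 1 1 0; Add 1 1 0; StoreI 1 2; Cst 2 3;
  Add 2 1 2; StoreI 2 3; Cst 3 1; Add 2 2 3; StoreI 2 4; Add 2 2 3; StoreI 2 5; Add 2 2 3;
  StoreI 2 6; Add 2 2 3; StoreI 2 7; Add 2 2 3; StoreI 2 8; Add 2 2 3; StoreI 2 9; Add 2 2 3;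
  StoreI 2 10; Add 2 2 3; StoreI 2 11; Cst 4 12; Add 5 1 4; Defs.Sub 6 1 4;
  (* 30 *) Jz 6 37; LoadI 7 4; StoreI 5 7; Add 4 4 3; Add 5 5 3; Defs.Sub 6 6 3; Jmp 30;
  (* 37 *) Half 8 0; Add 9 8 8; Defs.Sub 9 0 9; Defs.Sub 9 8 9; Cst 11 3; Add 11 11 1;
  Add 10 9 9; Add 10 10 11; Cst 4 0; Add 4 4 10; Cst 6 0; Add 6 6 8; Cst 2 0;
  (* 50 *) Jz 6 62; LoadI 5 4; Add 7 4 8; LoadI 7 7; Add 5 5 7; Half 7 5; Defs.Sub 5 5 7;
  Defs.Sub 5 5 7; Add 2 2 5; Add 4 4 3; Defs.Sub 6 6 3; Jmp 50;
  (* 62 *) Jz 2 99; Cst 6 0; Add 6 6 9;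
  (* 65 *) Jz 6 93; Cst 4 0; LoadI 5 11; Add 5 5 10; LoadI 7 5; Add 5 5 8; LoadI 5 5;
  Add 5 5 7; Half 7 5; Defs.Sub 5 5 7; Defs.Sub 5 5 7; Add 4 4 5; Add 11 11 3; LoadI 5 11;
  Add 5 5 10; LoadI 7 5; Add 5 5 8; LoadI 5 5; Add 5 5 7; Half 7 5; Defs.Sub 5 5 7;
  Defs.Sub 5 5 7; Add 4 4 5; Add 11 11 3; Half 4 4; Defs.Sub 2 2 4; Defs.Sub 6 6 3; Jmp 65;
  (* 93 *) LoadI 5 1; Jz 5 97; Defs.Sub 2 2 5; Jz 2 99; Cst 0 0; Halt; Cst 0 1; Halt].

Definition halts_with (c : config) (t : nat) (ans : bool) :=
  halted prog (exec prog t c) /\ (Defs.mem (exec prog t c) 0 != 0) = ans.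

Lemma halts_with_exec s t c c' ans :
  exec prog s c = c' -> halts_with c' t ans -> halts_with c (s + t) ans.
Proof. by rewrite /halts_with execD => ->. Qed.

Section Run.
Variables (m0 : nat -> nat) (n m k : nat).
Hypotheses (m0_0 : m0 0 = n) (m0_1 : m0 1 = m) (m0_2 : m0 2 = k).
Hypotheses (m_le_n : m <= n) (n_le_m1 : n <= m.+1).

Definition code := n + n + (n - m).
Definition offset := 12 + code + code.
Definition edges_at := offset + 3.
Definition bits_at := edges_at + m + m.

Lemma offset_ge12 : 12 <= offset. Proof. by rewrite /offset; lia. Qed.

Lemma offset_gt_input : 3 + m + m + n + n <= offset. Proof. by rewrite /offset /code; lia. Qed.

Lemma half_code : code./2 = n.
Proof.
rewrite /code; have : n - m <= 1 by lia.
case: (n - m) => [|[|//]] _; first by rewrite addn0 addnn doubleK.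
have -> : n + n + 1 = true + n.*2 by rewrite -addnn /=; lia.
exact: half_bit_double.
Qed.

Ltac run_step := rewrite execS /step /=; simpl_mem; rewrite /=;
  try rewrite -/code; try rewrite -/offset.

Lemma mk_mem_m0 : m0 = mk_mem [:: m0 0; m0 1; m0 2; m0 3; m0 4; m0 5; m0 6; m0 7; m0 8; m0 9;
  m0 10; m0 11] m0.
Proof.
apply: functional_extensionality => a; rewrite /mk_mem; case lt_a12: (a < 12) => //.
by do 12! [case: a lt_a12 => [|a] lt_a12; first by []].
Qed.

Definition setup_heap :=
  let H := upd m0 offset k in
  let H := upd H (offset + 3) (m0 3) in
  let H := upd H (offset + 3 + 1) (m0 4) in
  let H := upd H (offset + 3 + 1 + 1) (m0 5) in
  let H := upd H (offset + 3 + 1 + 1 + 1) (m0 6) in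
  let H := upd H (offset + 3 + 1 + 1 + 1 + 1) (m0 7) in
  let H := upd H (offset + 3 + 1 + 1 + 1 + 1 + 1) (m0 8) in
  let H := upd H (offset + 3 + 1 + 1 + 1 + 1 + 1 + 1) (m0 9) in
  let H := upd H (offset + 3 + 1 + 1 + 1 + 1 + 1 + 1 + 1) (m0 10) in
  upd H (offset + 3 + 1 + 1 + 1 + 1 + 1 + 1 + 1 + 1) (m0 11).

Lemma setup_heap_input a : 12 <= a < offset -> setup_heap a = m0 a.
Proof. by move=> a_in; rewrite /setup_heap /upd; repeat (case: eqP => ?); lia. Qed.

Lemma setup_heap_k : setup_heap offset = k.
Proof. by rewrite /setup_heap /upd; repeat (case: eqP => ?); lia. Qed.

Lemma setup_heap_saved a : 3 <= a < 12 -> setup_heap (offset + a) = m0 a.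
Proof.
move=> a_in; do 3 (case: a a_in => [|a] a_in; first by []).
by do 9 (case: a a_in => [|a] a_in;
  first by rewrite /setup_heap /upd; repeat (case: eqP => ?); lia).
Qed.

Lemma setup_phase : exec prog 30 (Config 0 m0) =
  Config 30 (mk_mem [:: code; offset; offset + 3 + 1 + 1 + 1 + 1 + 1 + 1 + 1 + 1; 1; 12;
    offset + 12; offset - 12; m0 7; m0 8; m0 9; m0 10; m0 11] setup_heap).
Proof.
have le12X := offset_ge12; rewrite {1}mk_mem_m0 m0_0 m0_1.
by do 6 run_step; rewrite m0_2; do 24 run_step.
Qed.

Definition copied (H : nat -> nat) := forall a, 3 <= a < offset -> H (offset + a) = m0 a.

Lemma copy_phase cnt : forall j r2 r7 H, cnt + j = offset - 12 ->
  (forall a, 12 <= a < offset -> H a = m0 a) -> H offset = k ->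
  (forall a, 3 <= a < 12 + j -> H (offset + a) = m0 a) ->
  exists r7' H', [/\ exec prog (7 * cnt + 1)
     (Config 30 (mk_mem [:: code; offset; r2; 1; 12 + j; offset + 12 + j; cnt; r7;
                          m0 8; m0 9; m0 10; m0 11] H)) =
     Config 37 (mk_mem [:: code; offset; r2; 1; 12 + j + cnt; offset + 12 + j + cnt; 0; r7';
                          m0 8; m0 9; m0 10; m0 11] H'),
     H' offset = k & copied H'].
Proof.
have le12X := offset_ge12; elim: cnt => [|c IH] j r2 r7 H cj H_in H_k H_copied.
  exists r7, H; split=> // [|a a_in]; last by apply: H_copied; lia.
  by rewrite !addn0; run_step.
have lt_j : 12 + j < offset by lia.
set H1 := upd H (offset + 12 + j) (H (12 + j)).
have H1_in a : 12 <= a < offset -> H1 a = m0 a.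
  by move=> a_in; rewrite /H1 upd_other ?H_in //; apply/eqP; lia.
have H1_k : H1 offset = k by rewrite /H1 upd_other ?H_k //; apply/eqP; lia.
have H1_copied a : 3 <= a < 12 + j.+1 -> H1 (offset + a) = m0 a.
  rewrite /H1 => a_in; have [->|a_ne] := eqVneq a (12 + j).
    by rewrite addnA upd_same H_in //; lia.
  by rewrite upd_other ?H_copied; [| lia | apply/eqP; lia].
have [r7' [H' [run H'_k H'_copied]]] := IH j.+1 r2 (H (12 + j)) H1 ltac:(lia) H1_in H1_k H1_copied.
exists r7', H'; split=> //.
rewrite (_ : 7 * c.+1 + 1 = 7 + (7 * c + 1)); last by lia.
rewrite execD; do 7 run_step.
rewrite (_ : 12 + j + 1 = 12 + j.+1); last by lia.
rewrite (_ : offset + 12 + j + 1 = offset + 12 + j.+1); last by lia.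
rewrite (_ : 12 + j + c.+1 = 12 + j.+1 + c); last by lia.
by rewrite (_ : offset + 12 + j + c.+1 = offset + 12 + j.+1 + c) ?subn1 //; lia.
Qed.

Lemma recover_phase z2 z4 z5 z6 z7 z8 z9 z10 z11 H :
  exec prog 13 (Config 37 (mk_mem [:: code; offset; z2; 1; z4; z5; z6; z7; z8; z9; z10; z11] H)) =
  Config 50 (mk_mem [:: code; offset; 0; 1; bits_at; z5; n; z7; n; m; bits_at; edges_at] H).
Proof.
have le12X := offset_ge12; do 13 run_step; rewrite half_code.
rewrite (_ : n - (code - (n + n)) = m); last by rewrite /code; lia.
rewrite (_ : 3 + offset = edges_at); last by rewrite /edges_at; lia.
by rewrite (_ : m + m + edges_at = bits_at) ?add0n // /bits_at; lia.
Qed.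

Definition xorn (a b : nat) := a + b - (a + b)./2 - (a + b)./2.

Lemma xornE (a b : bool) : xorn a b = (a != b).
Proof. by case: a; case: b. Qed.

Definition symdiff_bit (v : nat) := xorn (m0 (3 + m + m + v)) (m0 (3 + m + m + n + v)).

Lemma xornC a b : xorn a b = xorn b a.
Proof. by rewrite /xorn addnC. Qed.

Lemma copied_xorn H v : copied H -> v < n ->
  xorn (H (bits_at + v)) (H (bits_at + v + n)) = symdiff_bit v.
Proof.
move=> H_copied lt_vn; have input_lt := offset_gt_input.
rewrite (_ : bits_at + v = offset + (3 + m + m + v)); last by rewrite /bits_at /edges_at; lia.
rewrite (_ : offset + (3 + m + m + v) + n = offset + (3 + m + m + n + v)); last by lia.
by rewrite !H_copied //; lia.
Qed.

Lemma vertex_phase c : forall j acc z5 z7 H, c + j = n -> copied H ->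
  acc = \sum_(i < j) symdiff_bit i ->
  exists z5' z7', exec prog (12 * c + 1)
    (Config 50 (mk_mem [:: code; offset; acc; 1; bits_at + j; z5; c; z7; n; m; bits_at;
                          edges_at] H)) =
  Config 62 (mk_mem [:: code; offset; \sum_(i < n) symdiff_bit i; 1; bits_at + n; z5'; 0; z7'; n; m;
                       bits_at; edges_at] H).
Proof.
have le12X := offset_ge12; have le_X_bits : offset <= bits_at by rewrite /bits_at /edges_at; lia.
elim: c => [|c IH] j acc z5 z7 H cj H_copied acc_sum.
  by exists z5, z7; run_step; rewrite -cj add0n acc_sum.
have lt_jn : j < n by lia.
set s := H (bits_at + j) + H (bits_at + j + n).
have bit_j : s - s./2 - s./2 = symdiff_bit j := copied_xorn H_copied lt_jn.
have [z5' [z7' run]] := IH j.+1 (acc + symdiff_bit j) (symdiff_bit j) s./2 H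
  ltac:(lia) H_copied ltac:(by rewrite big_ord_recr /= acc_sum).
exists z5', z7'; rewrite (_ : 12 * c.+1 + 1 = 12 + (12 * c + 1)); last by lia.
rewrite execD; do 12 run_step; rewrite bit_j.
by rewrite (_ : bits_at + j + 1 = bits_at + j.+1) ?subn1 //; lia.
Qed.

Hypothesis edges_lt :
  forall i, i < m -> m0 (3 + i + i) < n /\ m0 (4 + i + i) < n.

Definition symdiff_edge_bit (i : nat) :=
  (symdiff_bit (m0 (3 + i + i)) + symdiff_bit (m0 (4 + i + i)))./2.

Lemma edge_step acc c i z4 z5 z7 H :
  exec prog 28 (Config 65 (mk_mem [:: code; offset; acc; 1; z4; z5; c.+1; z7; n; m; bits_at;
                                     edges_at + i + i] H)) =
  Config 65 (mk_mem [:: code; offset;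
    acc - (0 + xorn (H (H (edges_at + i + i) + bits_at + n)) (H (H (edges_at + i + i) + bits_at))
             + xorn (H (H (edges_at + i + i + 1) + bits_at + n))
                    (H (H (edges_at + i + i + 1) + bits_at)))./2; 1;
    (0 + xorn (H (H (edges_at + i + i) + bits_at + n)) (H (H (edges_at + i + i) + bits_at))
       + xorn (H (H (edges_at + i + i + 1) + bits_at + n))
              (H (H (edges_at + i + i + 1) + bits_at)))./2;
    xorn (H (H (edges_at + i + i + 1) + bits_at + n)) (H (H (edges_at + i + i + 1) + bits_at)); c;
    (H (H (edges_at + i + i + 1) + bits_at + n) + H (H (edges_at + i + i + 1) + bits_at))./2;
    n; m; bits_at; edges_at + i.+1 + i.+1] H).
Proof.
have le12X := offset_ge12.
have [le12_bits le12_edges] : 12 <= bits_at /\ 12 <= edges_at by rewrite /bits_at /edges_at; lia.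
do 28 run_step.
by rewrite subn1 (_ : edges_at + i + i + 1 + 1 = edges_at + i.+1 + i.+1) //; lia.
Qed.

Lemma edge_phase c : forall i acc z4 z5 z7 H, c + i = m -> copied H ->
  acc = \sum_(j < n) symdiff_bit j - \sum_(j < i) symdiff_edge_bit j ->
  exists z4' z5' z7', exec prog (28 * c + 1)
    (Config 65 (mk_mem [:: code; offset; acc; 1; z4; z5; c; z7; n; m; bits_at;
                          edges_at + i + i] H)) =
  Config 93 (mk_mem [:: code; offset;
    \sum_(j < n) symdiff_bit j - \sum_(j < m) symdiff_edge_bit j; 1; z4'; z5'; 0; z7'; n; m;
    bits_at; edges_at + m + m] H).
Proof.
have le12X := offset_ge12; have input_lt := offset_gt_input.
elim: c => [|c IH] i acc z4 z5 z7 H ci H_copied acc_sum.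
  by exists z4, z5, z7; run_step; rewrite -ci add0n acc_sum.
have lt_im : i < m by lia.
have [u_lt v_lt] := edges_lt lt_im.
have Hu : H (edges_at + i + i) = m0 (3 + i + i).
  by rewrite (_ : edges_at + i + i = offset + (3 + i + i)) ?H_copied // /edges_at; lia.
have Hv : H (edges_at + i + i + 1) = m0 (4 + i + i).
  by rewrite (_ : edges_at + i + i + 1 = offset + (4 + i + i)) ?H_copied // /edges_at; lia.
have [z4' [z5' [z7' run]]] := IH i.+1 (acc - symdiff_edge_bit i) (symdiff_edge_bit i)
  (symdiff_bit (m0 (4 + i + i)))
  ((H (m0 (4 + i + i) + bits_at + n) + H (m0 (4 + i + i) + bits_at))./2)
  H ltac:(lia) H_copied ltac:(by rewrite big_ord_recr /= acc_sum subnDA).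
exists z4', z5', z7'; rewrite (_ : 28 * c.+1 + 1 = 28 + (28 * c + 1)); last by lia.
have bit w : w < n -> xorn (H (w + bits_at + n)) (H (w + bits_at)) = symdiff_bit w.
  by move=> lt_wn; rewrite xornC addnC; apply: copied_xorn.
by rewrite execD edge_step Hu Hv !bit.
Qed.

Lemma answer_phase acc z4 z5 z6 z7 z11 H : H offset = k ->
  exists2 t, t <= 5 & halts_with (Config 93 (mk_mem [:: code; offset; acc; 1; z4; z5; z6; z7;
    n; m; bits_at; z11] H)) t ((k != 0) && (acc - k == 0)).
Proof.
have le12X := offset_ge12; move=> H_k; case k_eq: k => [|k'].
  by exists 3; rewrite // /halts_with; run_step; rewrite H_k k_eq; do 2 run_step.
exists 5; rewrite // /halts_with; run_step; rewrite H_k k_eq; do 3 run_step.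
by case: eqP => _; run_step.
Qed.

Lemma empty_check_yes a4 a5 a6 a7 H :
  halts_with (Config 62 (mk_mem [:: code; offset; 0; 1; a4; a5; a6; a7; n; m; bits_at;
    edges_at] H)) 2 true.
Proof. by rewrite /halts_with; do 2 run_step. Qed.

Lemma empty_check_no acc a4 a5 a6 a7 H : acc != 0 ->
  exec prog 3 (Config 62 (mk_mem [:: code; offset; acc; 1; a4; a5; a6; a7; n; m; bits_at;
    edges_at] H)) =
  Config 65 (mk_mem [:: code; offset; acc; 1; a4; a5; m; a7; n; m; bits_at; edges_at] H).
Proof. by move=> acc_n0; run_step; rewrite (negbTE acc_n0); do 2 run_step. Qed.

Definition symdiff_card := \sum_(v < n) symdiff_bit v.
Definition symdiff_edges := \sum_(i < m) symdiff_edge_bit i.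

Lemma prog_run : exists2 t, t <= 100 * n.+1 &
  halts_with (Config 0 m0) t
    ((symdiff_card == 0) || ((k != 0) && (symdiff_card - symdiff_edges - k == 0))).
Proof.
have le12X := offset_ge12.
have [r7 [H [copy H_k H_copied]]] := @copy_phase (offset - 12) 0 (offset + 3 + 1 + 1 + 1 + 1 + 1
  + 1 + 1 + 1) (m0 7) setup_heap ltac:(lia) setup_heap_input setup_heap_k
  ltac:(move=> a a_in; apply: setup_heap_saved; lia).
rewrite !addn0 in copy.
have [z5 [z7 vertices]] := @vertex_phase n 0 0 (offset + 12 + (offset - 12)) r7 H ltac:(lia)
  H_copied ltac:(by rewrite big_ord0).
rewrite !addn0 in vertices.
have to_check : exec prog (30 + (7 * (offset - 12) + 1 + (13 + (12 * n + 1)))) (Config 0 m0) =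
    Config 62 (mk_mem [:: code; offset; symdiff_card; 1; bits_at + n; z5; 0; z7; n; m; bits_at;
                         edges_at] H).
  by rewrite execD setup_phase execD copy execD recover_phase vertices.
have offset_le : offset - 12 <= 4 * n + 2 by rewrite /offset /code; lia.
have [size0 | size_n0] := eqVneq symdiff_card 0.
  exists (30 + (7 * (offset - 12) + 1 + (13 + (12 * n + 1))) + 2); first by lia.
  by apply: halts_with_exec to_check _; rewrite size0; apply: empty_check_yes.
have [z4' [z5' [z7' edges]]] := @edge_phase m 0 symdiff_card (bits_at + n) z5 z7 H ltac:(lia)
  H_copied ltac:(by rewrite big_ord0 subn0).
rewrite !addn0 in edges.
have [t t_le answer] :=
  @answer_phase (symdiff_card - symdiff_edges) z4' z5' 0 z7' (edges_at + m + m) H H_k.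
exists (30 + (7 * (offset - 12) + 1 + (13 + (12 * n + 1))) + (3 + (28 * m + 1 + t)));
  first by lia.
apply: halts_with_exec to_check _; apply: halts_with_exec (empty_check_no _ _ _ _ _ size_n0) _.
exact: halts_with_exec edges answer.
Qed.

End Run.

(** * The input encoding *)

Lemma size_flatten_pairs (T : Type) (s : seq T) (g1 g2 : T -> nat) :
  size (flatten [seq [:: g1 p; g2 p] | p <- s]) = size s + size s.
Proof. by elim: s => //= x s IH; rewrite IH addnS. Qed.

Lemma nth_flatten_pairs (T : Type) (s : seq T) (g1 g2 : T -> nat) p0 i : i < size s ->
  nth 0 (flatten [seq [:: g1 p; g2 p] | p <- s]) (i + i) = g1 (nth p0 s i) /\
  nth 0 (flatten [seq [:: g1 p; g2 p] | p <- s]) (i + i).+1 = g2 (nth p0 s i).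
Proof. by elim: s i => [|x s IH] [|i] //= lt_is; rewrite addnS /=; apply: IH. Qed.

Lemma nth_cat_block (s1 s2 s3 : seq nat) i :
  i < size s2 -> nth 0 (s1 ++ s2 ++ s3) (size s1 + i) = nth 0 s2 i.
Proof. by move=> lt_i; rewrite nth_cat ltnNge leq_addr addKn nth_cat lt_i. Qed.

Section Encoding.
Variables (n : nat) (es : seq ('I_n * 'I_n)) (Is It : {set 'I_n}) (k : nat).

Let edge_cells := flatten [seq [:: val p.1; val p.2] | p <- es].
Let bits (S : {set 'I_n}) := [seq nat_of_bool (u \in S) | u <- enum 'I_n].

Lemma encode_edge p0 i : i < size es ->
  encode es Is It k (3 + i + i) = (nth p0 es i).1 /\
  encode es Is It k (4 + i + i) = (nth p0 es i).2.
Proof.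
move=> lt_i; rewrite /encode -!addnA -/edge_cells.
have [cell1 cell2] := nth_flatten_pairs (fun p : 'I_n * 'I_n => val p.1) (fun p => val p.2) p0 lt_i.
have lt_edge j : j <= (i + i).+1 -> j < size edge_cells.
  move=> le_j; apply: leq_ltn_trans le_j _.
  by rewrite /edge_cells size_flatten_pairs -addnS -addSn leq_add.
rewrite !(nth_cat_block [:: n; size es; k]); first by split; [exact: cell1 | exact: cell2].
all: by apply: lt_edge; rewrite ?leqnSn ?leqnn.
Qed.

Lemma encode_bits (v : 'I_n) :
  encode es Is It k (3 + size es + size es + v) = (v \in Is) /\
  encode es Is It k (3 + size es + size es + n + v) = (v \in It).
Proof.
have size_bits S : size (bits S) = n by rewrite size_map size_enum_ord.
have nth_bits S : nth 0 (bits S) v = (v \in S) by rewrite (nth_map v) ?size_enum_ord ?nth_ord_enum.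
set pre := [:: n; size es; k] ++ edge_cells.
have size_pre : size pre = 3 + size es + size es.
  by rewrite size_cat /edge_cells size_flatten_pairs addnA.
rewrite /encode -/edge_cells -/(bits Is) -/(bits It) catA -/pre -size_pre.
split; first by rewrite nth_cat_block ?size_bits ?nth_bits.
have -> : size pre + n + v = size (pre ++ bits Is) + v by rewrite size_cat size_bits.
by rewrite catA -[_ ++ bits It]cats0 -catA nth_cat_block ?size_bits ?nth_bits.
Qed.

Lemma encode_edges_lt i : i < size es ->
  encode es Is It k (3 + i + i) < n /\ encode es Is It k (4 + i + i) < n.
Proof.
case: es encode_edge => [//|p0 s] encode_edge lt_i.
by have [-> ->] := encode_edge p0 _ lt_i; rewrite !ltn_ord.
Qed.

Lemma encode_symdiff_bit (v : 'I_n) :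
  symdiff_bit (encode es Is It k) n (size es) v = (v \in symdiff Is It).
Proof.
by have [bit_s bit_t] := encode_bits v; rewrite /symdiff_bit bit_s bit_t xornE in_symdiff.
Qed.

Lemma encode_symdiff_card : symdiff_card (encode es Is It k) n (size es) = #|symdiff Is It|.
Proof.
rewrite /symdiff_card (eq_bigr (fun v => (v \in symdiff Is It) : nat)) => [|v _].
  by rewrite sum_nat_bool; apply: eq_card.
by rewrite encode_symdiff_bit.
Qed.

Lemma encode_symdiff_edges : symdiff_edges (encode es Is It k) n (size es) =
  count (fun p => (p.1 \in symdiff Is It) && (p.2 \in symdiff Is It)) es.
Proof.
case: es encode_edge encode_symdiff_bit => [|p0 s] encode_edge encode_symdiff_bit.
  by rewrite /symdiff_edges big_ord0.
rewrite -sum_nat_bool_seq (big_nth p0) big_mkord; apply: eq_bigr => i _.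
rewrite /symdiff_edge_bit; have [-> ->] := encode_edge p0 _ (ltn_ord i).
by rewrite !encode_symdiff_bit; case: (_ \in _); case: (_ \in _).
Qed.

End Encoding.

Lemma prog_decides n (e : rel 'I_n) es Is It k (f : 'I_n -> 'I_n) cyc : injective f ->
  (forall u v, e u v = (next_label n cyc (f u) == f v) || (next_label n cyc (f v) == f u)) ->
  (cyc -> 3 <= n) -> edge_list e es -> independent e Is -> independent e It ->
  decides_within prog (encode es Is It k) (100 * n.+1) (SymISR e Is It k).
Proof.
move=> f_inj e_next cyc_ge3 es_edges Is_ind It_ind.
have [t le_t [t_halted t_answer]] := prog_run (erefl : encode es Is It k 0 = n) erefl erefl
  (size_edge_list_le f_inj e_next cyc_ge3 es_edges)
  (size_edge_list_ge f_inj e_next cyc_ge3 es_edges) (@encode_edges_lt n es Is It k).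
rewrite /decides_within -(subnK le_t) addnC execD exec_halted //; split=> //.
have ends_D : ends f cyc (symdiff Is It) =
    symdiff_card (encode es Is It k) n (size es) - symdiff_edges (encode es Is It k) n (size es).
  rewrite (ends_edge_list f_inj e_next cyc_ge3 es_edges) encode_symdiff_card encode_symdiff_edges.
  by rewrite sum_nat_bool; congr (_ - _); apply: eq_card.
rewrite t_answer (SymISR_ncomp f_inj e_next cyc_ge3 k Is_ind It_ind) /ncomp -ends_D.
rewrite encode_symdiff_card cards_eq0; case: eqP => _ //=.
by rewrite geq_max lt0n subn_eq0.
Qed.

Theorem corollary30 :
  exists (P : program) (C : nat),
    forall (n : nat) (e : rel 'I_n) (es : seq ('I_n * 'I_n))
           (Is It : {set 'I_n}) (k : nat),
      (is_path_graph e \/ is_cycle_graph e) ->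
      edge_list e es ->
      independent e Is -> independent e It ->
      decides_within P (encode es Is It k) (C * n.+1)
                     (SymISR e Is It k).
Proof.
exists prog, 100 => n e es Is It k [[f [f_inj e_f]] | [n_ge3 [f [f_inj e_f]]]] es_edges.
  by apply: (@prog_decides _ _ _ _ _ _ f false f_inj e_f _ es_edges).
exact: (@prog_decides _ _ _ _ _ _ f true f_inj e_f (fun _ => n_ge3) es_edges).
Qed.
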